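(* Let $R$ be the semiring $\mathbb{N}[T_1,T_2,T_3,T_4]/\langle T_1T_4\sim T_2T_3+1\rangle$, i.e. the quotient of the polynomial semiring over $\mathbb{N}$ by the smallest congruence containing the relation $T_1T_4\sim T_2T_3+1$, and let $A\subset R$ be the multiplicative subset consisting of $0$ and the images of all monomials $T_1^{e_1}T_2^{e_2}T_3^{e_3}T_4^{e_4}$ ($e_i\geq 0$). Let $B=(R,A)$ be the corresponding blueprint. Then the prime $k$-ideals of $B$ are exactly the following seven sets: $\{0\}$, $(T_1)$, $(T_2)$, $(T_3)$, $(T_4)$, $(T_1,T_4)$ and $(T_2,T_3)$, where $(T_i)_{i\in I}$ denotes the monoid ideal of $A$ generated by $\{T_i: i\in I\}$. In particular, $\operatorname{Spec}B$ has exactly seven points, its closed points being $(T_1,T_4)$ and $(T_2,T_3)$.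
   Context: A semiring is a set with commutative associative addition with neutral element $0$ and commutative associative multiplication with neutral element $1$, with $0$ absorbing and multiplication distributing over addition (no additive inverses required). A congruence on a semiring is an equivalence relation compatible with addition and multiplication. A blueprint is a pair $B=(R,A)$ of a semiring $R=B^+$ and a multiplicative subset $A=B^\bullet$ of $R$ containing $0$ and $1$ that generates $R$ as a semiring. An ideal of the monoid $B^\bullet$ is a subset $I$ with $0\in I$ and $ab\in I$ for all $a\in I$, $b\in B^\bullet$; the ideal generated by a subset is the smallest ideal containing it. A $k$-ideal of $B$ is an ideal $I$ of $B^\bullet$ such that $c\in I$ whenever $c\in B^\bullet$ and there are $a_1,\dots,a_n,b_1,\dots,b_m\in I$ with $\sum a_i+c=\sum b_j$ in $B^+$. A $k$-ideal $\mathfrak p$ is prime if $B^\bullet\setminus\mathfrak p$ contains $1$ and is closed under multiplication. $\operatorname{Spec}B$ is the set of prime $k$-ideals with the topology generated by the sets $U_h=\{\mathfrak p: h\notin\mathfrak p\}$, $h\in B^\bullet$. *)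

From mathcomp Require Import all_boot.
Set Implicit Arguments.
Unset Strict Implicit.
Unset Printing Implicit Defensive.

(* A monomial T1^e1 T2^e2 T3^e3 T4^e4 is its exponent vector. *)
Definition mon := (nat * nat * nat * nat)%type.

Definition mon1 : mon := (0, 0, 0, 0).
Definition T1 : mon := (1, 0, 0, 0).
Definition T2 : mon := (0, 1, 0, 0).
Definition T3 : mon := (0, 0, 1, 0).
Definition T4 : mon := (0, 0, 0, 1).

Definition monmul (a b : mon) : mon :=
  let: (a1, a2, a3, a4) := a in
  let: (b1, b2, b3, b4) := b in (a1 + b1, a2 + b2, a3 + b3, a4 + b4).

(* An element of the free semiring N[T1,..,T4] is a finite formal sum of
   monomials, i.e. a list of monomials up to permutation. *)
Definition npoly := seq mon.
Definition padd (p q : npoly) : npoly := p ++ q.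
Definition pmul (p q : npoly) : npoly := [seq monmul a b | a <- p, b <- q].

(* The smallest congruence on N[T1,..,T4] containing T1T4 ~ T2T3 + 1
   (permutation of summands = equality in N[T]). *)
Inductive cong : npoly -> npoly -> Prop :=
| cong_perm p q : perm_eq p q -> cong p q
| cong_gen : cong [:: monmul T1 T4] [:: monmul T2 T3; mon1]
| cong_sym p q : cong p q -> cong q p
| cong_trans p q r : cong p q -> cong q r -> cong p r
| cong_add p q r : cong p q -> cong (padd p r) (padd q r)
| cong_mul p q r : cong p q -> cong (pmul p r) (pmul q r).

(* Representatives of elements of A = B^bullet: None is 0, Some e the monomial e. *)
Definition elt := option mon.
Definition toP (x : elt) : npoly := if x is Some e then [:: e] else [::].
Definition emul (x y : elt) : elt :=
  match x, y with Some a, Some b => Some (monmul a b) | _, _ => None end.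
Definition eq_R (x y : elt) : Prop := cong (toP x) (toP y).

(* A subset of B^bullet, given on representatives; it must be saturated,
   i.e. depend only on the class in R. *)
Definition saturated (I : elt -> Prop) : Prop :=
  forall x y, eq_R x y -> I x -> I y.

Definition sameset (I J : elt -> Prop) : Prop := forall x, I x <-> J x.

Definition is_ideal (I : elt -> Prop) : Prop :=
  I None /\ forall a b, I a -> I (emul a b).

Definition sumE (s : seq elt) : npoly := flatten (map toP s).

Definition is_k_ideal (I : elt -> Prop) : Prop :=
  is_ideal I /\
  forall (c : elt) (as_ bs : seq elt),
    (forall a, a \in as_ -> I a) -> (forall b, b \in bs -> I b) ->
    cong (padd (sumE as_) (toP c)) (sumE bs) -> I c.

Definition is_prime_k_ideal (I : elt -> Prop) : Prop :=
  is_k_ideal I /\ ~ I (Some mon1) /\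
  forall a b, ~ I a -> ~ I b -> ~ I (emul a b).

Definition gen_ideal (S : elt -> Prop) (x : elt) : Prop :=
  eq_R x None \/ exists s a, S s /\ eq_R x (emul s a).

Definition gens (l : seq mon) (s : elt) : Prop :=
  exists2 m, m \in l & s = Some m.

Inductive point := P0 | PT1 | PT2 | PT3 | PT4 | PT14 | PT23.

Definition pt_ideal (p : point) : elt -> Prop :=
  match p with
  | P0 => fun x => eq_R x None
  | PT1 => gen_ideal (gens [:: T1])
  | PT2 => gen_ideal (gens [:: T2])
  | PT3 => gen_ideal (gens [:: T3])
  | PT4 => gen_ideal (gens [:: T4])
  | PT14 => gen_ideal (gens [:: T1; T4])
  | PT23 => gen_ideal (gens [:: T2; T3])
  end.

(* {P} is closed in Spec B (topology generated by U_h = {q | h not in q}):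
   every other point Q has a neighbourhood, a finite intersection of U_h's,
   that does not contain P. *)
Definition closed_point (P : elt -> Prop) : Prop :=
  forall Q, saturated Q -> is_prime_k_ideal Q -> ~ sameset Q P ->
    exists hs : seq elt, (forall h, h \in hs -> ~ Q h) /\ (exists2 h, h \in hs & P h).

From Pilot Require Import Defs.
From mathcomp Require Import all_boot all_algebra ring.
From Stdlib Require Import Classical.
Import GRing.Theory.

Set Implicit Arguments.
Unset Strict Implicit.
Unset Printing Implicit Defensive.

Local Open Scope ring_scope.

(* An element of B^bullet is 0 or a monomial, and a prime k-ideal I has a
   multiplicative complement, so I is determined by which of T1, ..., T4 it
   contains.  If I contained one of T1, T4 and one of T2, T3, then T2T3 + 1 = T1T4
   would force 1 into I; this leaves the seven listed sets.  Conversely each of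
   them is the kernel of evaluation at an integer point with t1 t4 = t2 t3 + 1
   whose vanishing coordinates are exactly its generators; such kernels are prime
   k-ideals since Z is a domain and evaluation respects the congruence.  A point
   is closed iff its set of variables is maximal, i.e. {T1, T4} or {T2, T3}. *)

Section Evaluation.
Variable R : comPzRingType.

Definition mon_eval (t : R * R * R * R) (m : Defs.mon) : R :=
  let: (t1, t2, t3, t4) := t in let: (e1, e2, e3, e4) := m in
  t1 ^+ e1 * t2 ^+ e2 * t3 ^+ e3 * t4 ^+ e4.

Definition poly_eval t (p : Defs.npoly) : R := \sum_(m <- p) mon_eval t m.

Definition on_relation (t : R * R * R * R) : Prop :=
  let: (t1, t2, t3, t4) := t in t1 * t4 = t2 * t3 + 1.

Lemma mon_evalM t a b : mon_eval t (monmul a b) = mon_eval t a * mon_eval t b.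
Proof.
case: t => [[[t1 t2] t3] t4]; case: a => [[[a1 a2] a3] a4].
by case: b => [[[b1 b2] b3] b4] /=; rewrite !exprD; ring.
Qed.

Lemma mon_eval1 t : mon_eval t mon1 = 1.
Proof. by case: t => [[[t1 t2] t3] t4]; rewrite /= !expr0 !mulr1. Qed.

Lemma poly_eval_cat t p q : poly_eval t (p ++ q) = poly_eval t p + poly_eval t q.
Proof. exact: big_cat. Qed.

Lemma poly_evalM t p q : poly_eval t (pmul p q) = poly_eval t p * poly_eval t q.
Proof.
elim: p => [|a p IHp]; first by rewrite /poly_eval big_nil mul0r.
rewrite [pmul _ _]/= poly_eval_cat IHp /poly_eval big_cons mulrDl big_map.
by congr (_ + _); rewrite mulr_sumr; apply: eq_bigr => m _; apply: mon_evalM.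
Qed.

Lemma poly_eval_cong t p q : on_relation t -> cong p q -> poly_eval t p = poly_eval t q.
Proof.
move=> t_rel; elim=> {p q} [p q|| p q _ -> // |p q r _ -> _ -> // |p q r _ e|p q r _ e].
- exact: perm_big.
- case: t t_rel => [[[t1 t2] t3] t4] /= t_rel.
  rewrite /poly_eval !big_cons !big_nil /= !expr0 !expr1.
  by rewrite !mulr1 !mul1r !addr0 t_rel.
- by rewrite /padd !poly_eval_cat e.
- by rewrite !poly_evalM e.
Qed.

Lemma poly_eval_toP t x :
  poly_eval t (toP x) = if x is Some m then mon_eval t m else 0.
Proof. by case: x => [m|]; rewrite /poly_eval ?big_seq1 ?big_nil. Qed.

Lemma poly_eval_emul t x y :
  poly_eval t (toP (emul x y)) = poly_eval t (toP x) * poly_eval t (toP y).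
Proof.
by case: x => [a|]; case: y => [b|]; rewrite !poly_eval_toP /= ?mul0r ?mulr0 ?mon_evalM.
Qed.

Lemma poly_eval_sumE t s :
  (forall x, x \in s -> poly_eval t (toP x) = 0) -> poly_eval t (sumE s) = 0.
Proof.
elim: s => [|x s IHs] s0; first by rewrite /poly_eval big_nil.
rewrite /sumE /= poly_eval_cat s0 ?mem_head // add0r IHs // => y ys.
by apply: s0; rewrite inE ys orbT.
Qed.

End Evaluation.

Definition eval_kernel (R : comPzRingType) (t : R * R * R * R) : elt -> Prop :=
  fun x => poly_eval t (toP x) = 0.

Section EvaluationKernel.
Variables (R : idomainType) (t : R * R * R * R).
Hypothesis t_rel : on_relation t.

Lemma eval_kernel_saturated : saturated (eval_kernel t).
Proof. by move=> x y xy; rewrite /eval_kernel (poly_eval_cong t_rel xy). Qed.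

Lemma eval_kernel_prime : is_prime_k_ideal (eval_kernel t).
Proof.
rewrite /eval_kernel; split; [split; [split|] | split].
- by rewrite poly_eval_toP.
- by move=> x y x0; rewrite poly_eval_emul x0 mul0r.
- move=> c xs ys xs0 ys0 /(poly_eval_cong t_rel).
  by rewrite poly_eval_cat !poly_eval_sumE // add0r.
- by rewrite poly_eval_toP mon_eval1; apply/eqP; rewrite oner_eq0.
- move=> x y /eqP x0 /eqP y0; rewrite poly_eval_emul; apply/eqP.
  by rewrite mulf_eq0 negb_or x0.
Qed.

End EvaluationKernel.

Definition varset := (bool * bool * bool * bool)%type.

Definition involves (S : varset) (m : Defs.mon) : bool :=
  let: (b1, b2, b3, b4) := S in let: (e1, e2, e3, e4) := m in
  [|| (0 < e1)%N && b1, (0 < e2)%N && b2, (0 < e3)%N && b3 | (0 < e4)%N && b4].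

Definition var_list (S : varset) : seq Defs.mon :=
  let: (b1, b2, b3, b4) := S in mask [:: b1; b2; b3; b4] [:: T1; T2; T3; T4].

Definition zero_vars (R : idomainType) (t : R * R * R * R) : varset :=
  let: (t1, t2, t3, t4) := t in (t1 == 0, t2 == 0, t3 == 0, t4 == 0).

Definition vsub (S S' : varset) : bool :=
  let: (a1, a2, a3, a4) := S in let: (b1, b2, b3, b4) := S' in
  [&& a1 ==> b1, a2 ==> b2, a3 ==> b3 & a4 ==> b4].

Lemma involves_vsub S S' m : vsub S S' -> involves S m -> involves S' m.
Proof.
case: S S' m => [[[a1 a2] a3] a4] [[[b1 b2] b3] b4] [[[e1 e2] e3] e4] /=.
case/and4P=> /implyP h1 /implyP h2 /implyP h3 /implyP h4.
case/or4P=> [/andP [-> /h1 ->]|/andP [-> /h2 ->]|/andP [-> /h3 ->]|/andP [-> /h4 ->]];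
  by rewrite ?orbT.
Qed.

Lemma vsubE S S' :
  vsub S S' = all (fun x => involves S x ==> involves S' x) [:: T1; T2; T3; T4].
Proof.
by case: S S' => [[[a1 a2] a3] a4] [[[b1 b2] b3] b4]; rewrite /= ?andbT ?andbF ?orbF.
Qed.

Lemma mon_eval_eq0 (R : idomainType) (t : R * R * R * R) m :
  (mon_eval t m == 0) = involves (zero_vars t) m.
Proof.
case: t => [[[t1 t2] t3] t4]; case: m => [[[e1 e2] e3] e4] /=.
by rewrite !mulf_eq0 !expf_eq0 -!orbA.
Qed.

Lemma var_list_involved S : all (involves S) (var_list S).
Proof. by case: S => [[[[] []] []] []]. Qed.

Lemma involves_factor S m :
  involves S m -> exists2 x, x \in var_list S & exists m', m = monmul x m'.
Proof.
case: S => [[[b1 b2] b3] b4]; case: m => [[[e1 e2] e3] e4].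
case/or4P=> /andP [e_pos b_in].
- exists T1; first by rewrite /= b_in mem_head.
  by exists (e1.-1, e2, e3, e4); case: e1 e_pos.
- exists T2; first by rewrite /= b_in; case: b1; rewrite !inE eqxx ?orbT.
  by exists (e1, e2.-1, e3, e4); case: e2 e_pos.
- exists T3; first by rewrite /= b_in; case: b1; case: b2; rewrite !inE eqxx ?orbT.
  by exists (e1, e2, e3.-1, e4); case: e3 e_pos.
- exists T4; first by rewrite /= b_in; case: b1; case: b2; case: b3;
    rewrite !inE eqxx ?orbT.
  by exists (e1, e2, e3, e4.-1); case: e4 e_pos.
Qed.

Lemma gen_ideal_nil x : gen_ideal (gens [::]) x <-> eq_R x None.
Proof. by split=> [[//|[s [a [[m]]]]]|]; [|left]. Qed.

Lemma eval_kernel_gen_ideal (R : idomainType) (t : R * R * R * R) :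
  on_relation t -> sameset (eval_kernel t) (gen_ideal (gens (var_list (zero_vars t)))).
Proof.
move=> t_rel [m|] /=; split.
- move/eqP; rewrite poly_eval_toP mon_eval_eq0 => /involves_factor [x x_var [m' ->]].
  by right; exists (Some x), (Some m'); split; [exists x | apply: cong_perm].
- case=> [|[_ [a [[x x_var ->]]]]] /(poly_eval_cong t_rel); rewrite /eval_kernel.
    by rewrite !poly_eval_toP.
  rewrite poly_eval_emul !poly_eval_toP => ->.
  have /allP/(_ x x_var) := var_list_involved (zero_vars t).
  by rewrite -mon_eval_eq0 => /eqP ->; rewrite mul0r.
- by left; apply: cong_perm.
- by rewrite /eval_kernel poly_eval_toP.
Qed.

(* The zero coordinates of [witness p] are exactly the generators of [pt_ideal p]. *)
Definition witness (p : point) : int * int * int * int :=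
  match p with
  | P0 => (2, 1, 1, 1) | PT1 => (0, 1, -1, 1) | PT2 => (1, 0, 1, 1)
  | PT3 => (1, 1, 0, 1) | PT4 => (1, 1, -1, 0) | PT14 => (0, 1, -1, 0)
  | PT23 => (1, 0, 0, 1)
  end.

Definition vars (p : point) : varset := zero_vars (witness p).

Lemma witness_on_relation p : on_relation (witness p).
Proof. by case: p. Qed.

Lemma vars_onto (b1 b2 b3 b4 : bool) :
  ~~ ((b1 || b4) && (b2 || b3)) -> exists p, vars p = (b1, b2, b3, b4).
Proof.
case: b1; case: b2; case: b3; case: b4 => // _.
all: by [exists P0 | exists PT1 | exists PT2 | exists PT3 | exists PT4
        | exists PT14 | exists PT23].
Qed.

Lemma pt_ideal_kernel p : sameset (pt_ideal p) (eval_kernel (witness p)).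
Proof.
move=> x; apply: iff_sym; rewrite (eval_kernel_gen_ideal (witness_on_relation p) x).
by case: p; first exact: gen_ideal_nil.
Qed.

Lemma sameset_prime I J : sameset I J -> is_prime_k_ideal J -> is_prime_k_ideal I.
Proof.
move=> IJ [[[J0 Jmul] Jk] [J1 Jprime]]; split; [split; [split|] | split].
- exact/IJ.
- by move=> x y /IJ Jx; apply/IJ/Jmul.
- by move=> c xs ys xsI ysI e; apply/IJ/(Jk c xs ys) => [x /xsI /IJ|x /ysI /IJ|].
- by move/IJ.
- by move=> x y /IJ Jx /IJ Jy /IJ; apply: Jprime.
Qed.

Lemma pt_ideal_saturated p : saturated (pt_ideal p).
Proof.
move=> x y xy /pt_ideal_kernel px; apply/pt_ideal_kernel.
exact: eval_kernel_saturated (witness_on_relation p) _ _ xy px.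
Qed.

Lemma pt_ideal_prime p : is_prime_k_ideal (pt_ideal p).
Proof.
apply: sameset_prime (pt_ideal_kernel p) _.
exact: eval_kernel_prime (witness_on_relation p).
Qed.

Lemma pt_ideal0 p : pt_ideal p None.
Proof. by case: (pt_ideal_prime p) => [[[]]]. Qed.

Lemma pt_idealE p m : pt_ideal p (Some m) <-> involves (vars p) m.
Proof.
rewrite pt_ideal_kernel /eval_kernel poly_eval_toP -mon_eval_eq0.
by split=> [->|/eqP].
Qed.



Lemma pt_ideal_subP p q :
  (forall x, pt_ideal p x -> pt_ideal q x) <-> vsub (vars p) (vars q).
Proof.
split=> [pq|pq [m|_]]; last exact: pt_ideal0.
- by rewrite vsubE; apply/allP=> x _; apply/implyP=> /pt_idealE /pq /pt_idealE.
- by move=> /pt_idealE /(involves_vsub pq) /pt_idealE.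
Qed.

Lemma pt_ideal_inj p q : sameset (pt_ideal p) (pt_ideal q) -> p = q.
Proof.
move=> pq; have /pt_ideal_subP := fun x => proj1 (pq x).
have /pt_ideal_subP := fun x => proj2 (pq x).
by clear pq; case: p; case: q.
Qed.

Lemma vars_maximal p :
  (forall q, q <> p -> ~~ vsub (vars p) (vars q)) <-> p = PT14 \/ p = PT23.
Proof.
split; last by case=> ->; case.
move=> max; have below q : q <> p -> vsub (vars p) (vars q) -> False.
  by move=> /max /negP.
by case: p max below => _ below; [case: (below PT14)|case: (below PT14)|case: (below PT23)
  |case: (below PT23)|case: (below PT14)|left|right].
Qed.





Lemma monmulC : commutative monmul.
Proof.
move=> [[[a1 a2] a3] a4] [[[b1 b2] b3] b4].
by rewrite /= (addnC a1) (addnC a2) (addnC a3) (addnC a4).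
Qed.

Definition mpow (x : Defs.mon) (e : nat) : Defs.mon := iter e (monmul x) mon1.

Lemma mpowE a1 a2 a3 a4 e : mpow (a1, a2, a3, a4) e = (e * a1, e * a2, e * a3, e * a4)%N.
Proof. by elim: e => //= e ->; rewrite !mulSn. Qed.

Lemma mon_decomp e1 e2 e3 e4 :
  (e1, e2, e3, e4) =
  monmul (mpow T1 e1) (monmul (mpow T2 e2) (monmul (mpow T3 e3) (mpow T4 e4))).
Proof. by rewrite !mpowE /= !muln1 !muln0 !addn0 !add0n. Qed.

Section PrimeKIdeals.
Variable I : elt -> Prop.
Hypothesis I_prime : is_prime_k_ideal I.

Lemma prime_monmul a b : I (Some (monmul a b)) <-> I (Some a) \/ I (Some b).
Proof.
case: I_prime => [[[_ I_mul] _] [_ I_sep]]; split.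
  by move=> ab; apply: NNPP => /not_or_and [na nb]; apply: (I_sep _ _ na nb).
case=> [/(I_mul _ (Some b)) //|/(I_mul _ (Some a))].
by rewrite /= monmulC.
Qed.

Lemma prime_mpow x e : I (Some (mpow x e)) <-> (0 < e)%N /\ I (Some x).
Proof.
case: I_prime => _ [I1 _]; elim: e => [|e IHe] /=; first by split=> [/I1|[]].
by rewrite prime_monmul IHe; split=> [[Ix|[_ Ix]]|[_ Ix]]; [| |left].
Qed.

Lemma prime_monE (b1 b2 b3 b4 : bool) :
  (I (Some T1) <-> b1) -> (I (Some T2) <-> b2) ->
  (I (Some T3) <-> b3) -> (I (Some T4) <-> b4) ->
  forall m, I (Some m) <-> involves (b1, b2, b3, b4) m.
Proof.
move=> E1 E2 E3 E4 [[[e1 e2] e3] e4].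
rewrite {1}mon_decomp !prime_monmul !prime_mpow E1 E2 E3 E4.
by rewrite !(rwP andP) !(rwP orP).
Qed.

(* From T2T3 + 1 = T1T4 the k-ideal condition would put 1 into I. *)
Lemma prime_sep14_23 : I (Some (monmul T1 T4)) -> I (Some (monmul T2 T3)) -> False.
Proof.
case: I_prime => [[_ I_k] [I1 _]] I14 I23; apply: I1.
apply: (I_k _ [:: Some (monmul T2 T3)] [:: Some (monmul T1 T4)]).
- by move=> x; rewrite inE => /eqP ->.
- by move=> x; rewrite inE => /eqP ->.
- exact: cong_sym cong_gen.
Qed.

Lemma prime_classify : exists p, sameset I (pt_ideal p).
Proof.
have bool_of (x : elt) : exists b : bool, I x <-> b.
  by case: (classic (I x)) => Ix; [exists true | exists false].
have [b1 E1] := bool_of (Some T1); have [b2 E2] := bool_of (Some T2).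
have [b3 E3] := bool_of (Some T3); have [b4 E4] := bool_of (Some T4).
have IE := prime_monE E1 E2 E3 E4.
have [p vars_p] : exists p, vars p = (b1, b2, b3, b4).
  apply: vars_onto; apply/negP=> /andP [b14 b23]; apply: prime_sep14_23.
  - exact/IE.
  - by apply/IE; rewrite /= orbF.
exists p => -[m|].
- by rewrite pt_idealE vars_p IE.
- by split=> _; [apply: pt_ideal0 | case: I_prime => [[[]]]].
Qed.

End PrimeKIdeals.

Lemma closed_pointE p :
  closed_point (pt_ideal p) <-> forall q, q <> p -> ~~ vsub (vars p) (vars q).
Proof.
split=> [closed q qp | max_p Q _ Q_prime QP].
  apply/negP=> /pt_ideal_subP pq.
  have [hs [notQ [h h_hs ph]]] := closed _ (@pt_ideal_saturated q) (pt_ideal_prime q)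
    (fun qp_eq => qp (pt_ideal_inj qp_eq)).
  exact: notQ h h_hs (pq h ph).
have [q Qq] := prime_classify Q_prime.
have /negP not_pq : ~~ vsub (vars p) (vars q).
  by apply: max_p => qp; apply: QP => x; rewrite Qq qp.
have [x [px notQx]] : exists x, pt_ideal p x /\ ~ Q x.
  apply: NNPP => none; apply/not_pq/pt_ideal_subP => x px.
  by apply/Qq; apply: NNPP => notQx; apply: none; exists x.
exists [:: x]; split=> [h|]; first by rewrite inE => /eqP ->.
by exists x; first exact: mem_head.
Qed.

Theorem mainTheorem1 :
  (forall I : elt -> Prop, saturated I ->
     (is_prime_k_ideal I <-> exists p : point, sameset I (pt_ideal p))) /\
  (forall p q : point, sameset (pt_ideal p) (pt_ideal q) -> p = q) /\
  (forall p : point, closed_point (pt_ideal p) <-> (p = PT14 \/ p = PT23)).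
Proof.
split; [|split].
- move=> I _; split; first exact: prime_classify.
  by case=> p /sameset_prime; apply; apply: pt_ideal_prime.
- exact: pt_ideal_inj.
- by move=> p; rewrite closed_pointE vars_maximal.
Qed.
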